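(* Let $P$ be a hereditary property, let $(G,f)\in\mathcal C$ with $P(G,f)$, and let $W\subseteq V(G)$ be finite. Then there exists a finite $f$-factor $F$ of $G$ such that $P(G-F,\,f-d_F)$ holds, $d_F(x)=f(x)$ for every $x\in W$ with $f(x)<\aleph_0$, and $d_F(x)>0$ for every $x\in W$ with $f(x)\ge\aleph_0$.
   Context: A graph is $G=(V,E)$ with $V$ a nonempty set and $E\subseteq\{e\subseteq V:|e|=2\}$. For $F\subseteq E$ and $x\in V$, $d_F(x)$ is the cardinal $|\{e\in F:x\in e\}|$. For a function $f:V\to$ Cardinals, an $f$-factor of $G$ is a set $F\subseteq E$ with $d_F(x)\le f(x)$ for all $x\in V$; it is perfect if $d_F(x)=f(x)$ for all $x\in V$. $\mathcal C$ is the class of all pairs $(G,f)$ with $G=(V,E)$ a graph, $f:V\to$ Cardinals, and $f(x)\le d_E(x)$ for all $x\in V$. A property $P$ is a class of pairs; $P(G,f)$ means that $(G,f)\in\mathcal C$ and $(G,f)$ has property $P$. For $H\subseteq E$, $G-H=(V,E\setminus H)$; for $x,y\in V$, $G-\{x,y\}$ denotes $(V,E\setminus\{\{x,y\}\})$ (removal of the single edge $\{x,y\}$). For $x,y\in V$, $f_{x,y}(v)=f(v)-1$ if $v\in\{x,y\}$ and $1\le f(v)<\aleph_0$, and $f_{x,y}(v)=f(v)$ otherwise. $P$ is hereditary if for every $(G,f)$ with $P(G,f)$ and every $x\in V(G)$ with $f(x)>0$ there is $y\in V(G)$ with $f(y)>0$, $\{x,y\}\in E(G)$ and $P(G-\{x,y\},f_{x,y})$.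 For a finite $F\subseteq E$ with $d_F\le f$, $f-d_F$ is the function $x\mapsto f(x)-d_F(x)$ if $f(x)<\aleph_0$ and $x\mapsto f(x)$ if $f(x)\ge\aleph_0$. *)

From Stdlib Require Import List Arith ClassicalEpsilon.
Import ListNotations.

(** Cardinals: a finite cardinal is a natural number [cfin n]; an infinite
    cardinal is represented by a type [cinf T] (standing for |T|, which is
    required to be >= aleph_0 wherever it matters, see [inC]).  Two
    representations denote the same cardinal iff [ceq] holds. *)
Inductive card : Type :=
  | cfin : nat -> card
  | cinf : Type -> card.

Definition injectiveF {A B : Type} (g : A -> B) : Prop :=
  forall a a', g a = g a' -> a = a'.
Definition bijectiveF {A B : Type} (g : A -> B) : Prop :=
  injectiveF g /\ forall b, exists a, g a = b.

Definition infiniteT (T : Type) : Prop := exists g : nat -> T, injectiveF g.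

Definition ceq (c d : card) : Prop :=
  match c, d with
  | cfin n, cfin m => n = m
  | cinf T, cinf U => exists g : T -> U, bijectiveF g
  | _, _ => False
  end.

Definition cpos (c : card) : Prop :=
  match c with cfin n => 0 < n | cinf _ => True end.

Definition is_graph (V : Type) (E : V -> V -> Prop) : Prop :=
  inhabited V /\ (forall x y, E x y -> E y x) /\ (forall x, ~ E x x).

Definition le_deg {V : Type} (E : V -> V -> Prop) (x : V) (c : card) : Prop :=
  match c with
  | cfin n => exists g : {i : nat | i < n} -> {y : V | E x y}, injectiveF g
  | cinf T => infiniteT T /\ exists g : T -> {y : V | E x y}, injectiveF g
  end.

Definition inC (V : Type) (E : V -> V -> Prop) (f : V -> card) : Prop :=
  is_graph V E /\ forall x, le_deg E x (f x).

Definition property := forall V : Type, (V -> V -> Prop) -> (V -> card) -> Prop.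

Definition holdsP (P : property) (V : Type) (E : V -> V -> Prop) (f : V -> card) : Prop :=
  inC V E f /\ P V E f.

(** P is a class of pairs (G,f) with f valued in cardinals: it may only
    depend on the cardinals denoted, not on their representation. *)
Definition rep_invariant (P : property) : Prop :=
  forall V E (f g : V -> card), (forall v, ceq (f v) (g v)) -> P V E f -> P V E g.

Definition remove_edge {V : Type} (E : V -> V -> Prop) (x y : V) : V -> V -> Prop :=
  fun u v => E u v /\ ~ ((u = x /\ v = y) \/ (u = y /\ v = x)).

Definition remove_edges {V : Type} (E H : V -> V -> Prop) : V -> V -> Prop :=
  fun u v => E u v /\ ~ H u v.

Definition cdec (c : card) : card :=
  match c with cfin n => cfin (Nat.pred n) | cinf T => cinf T end.

Definition fdec {V : Type} (f : V -> card) (x y : V) : V -> card :=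
  fun v => if excluded_middle_informative (v = x \/ v = y) then cdec (f v) else f v.

Definition hereditary (P : property) : Prop :=
  forall V E f, holdsP P V E f ->
  forall x, cpos (f x) ->
  exists y, cpos (f y) /\ E x y /\ holdsP P V (remove_edge E x y) (fdec f x y).

Definition csub (c : card) (d : nat) : card :=
  match c with cfin n => cfin (n - d) | cinf T => cinf T end.

Definition nat_le_card (d : nat) (c : card) : Prop :=
  match c with cfin n => d <= n | cinf _ => True end.

Definition finite_edges {V : Type} (F : V -> V -> Prop) : Prop :=
  exists s : list (V * V), forall u v, F u v -> In (u, v) s.

(** d_F(x) = n  (F symmetric, irreflexive: edges at x <-> neighbours of x) *)
Definition degree_is {V : Type} (F : V -> V -> Prop) (x : V) (n : nat) : Prop :=
  exists l : list V, NoDup l /\ length l = n /\ forall y, F x y <-> In y l.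

(* Repeatedly apply heredity at a vertex x of W: each application moves one
   edge xy into F, lowering the remaining demand at x and y by one and keeping
   P true for the remaining graph.  A vertex of finite demand n is saturated
   after at most n steps, a vertex of infinite demand after one; saturating
   the vertices of W one after another gives the required finite factor. *)
From Stdlib Require Import List Lia FunctionalExtensionality PropExtensionality ClassicalEpsilon.
Import ListNotations.

Definition add_edge {V : Type} (F : V -> V -> Prop) (x y : V) : V -> V -> Prop :=
  fun u v => F u v \/ (u = x /\ v = y) \/ (u = y /\ v = x).

Definition bump {V : Type} (d : V -> nat) (x y : V) : V -> nat :=
  fun v => if excluded_middle_informative (v = x \/ v = y) then S (d v) else d v.

Lemma degree_is_add_edge {V : Type} (F : V -> V -> Prop) (d : V -> nat) (x y : V) :
  (forall u v, F u v -> F v u) -> x <> y -> ~ F x y ->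
  (forall v, degree_is F v (d v)) -> forall v, degree_is (add_edge F x y) v (bump d x y v).
Proof.
  intros Fsym xy nFxy Hdeg v; unfold bump, add_edge.
  destruct (Hdeg v) as [l [nd [len Hl]]].
  destruct (excluded_middle_informative (v = x \/ v = y)) as [[-> | ->] | nv].
  - exists (y :: l); split; [constructor; [rewrite <- Hl |]; auto |].
    split; [simpl; lia |]; intro z; simpl; rewrite <- Hl.
    split; [intros [H | [[_ H] | [H _]]]; subst; tauto | intros [<- | H]; auto].
  - exists (x :: l); split; [constructor; [rewrite <- Hl |]; auto |].
    split; [simpl; lia |]; intro z; simpl; rewrite <- Hl.
    split; [intros [H | [[H _] | [_ H]]]; subst; tauto | intros [<- | H]; auto].
  - exists l; split; [| split]; auto; intro z; rewrite <- Hl.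
    split; [intros [H | [[H _] | [H _]]]; subst; tauto | auto].
Qed.

Lemma remove_edge_remove_edges {V : Type} (E F : V -> V -> Prop) (x y : V) :
  remove_edge (remove_edges E F) x y = remove_edges E (add_edge F x y).
Proof.
  do 2 (apply functional_extensionality; intros).
  apply propositional_extensionality; unfold remove_edge, remove_edges, add_edge; tauto.
Qed.

Lemma fdec_csub {V : Type} (f : V -> card) (d : V -> nat) (x y : V) :
  fdec (fun v => csub (f v) (d v)) x y = (fun v => csub (f v) (bump d x y v)).
Proof.
  apply functional_extensionality; intro v; unfold fdec, bump.
  destruct (excluded_middle_informative _); auto.
  destruct (f v); simpl; auto; f_equal; lia.
Qed.

Lemma nat_le_card_S (n : nat) (c : card) :
  nat_le_card n c -> cpos (csub c n) -> nat_le_card (S n) c.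
Proof. destruct c; simpl; auto; lia. Qed.

Section Saturation.

Variable P : property.
Hypothesis P_hereditary : hereditary P.
Variables (V : Type) (E : V -> V -> Prop) (f : V -> card).

Record good_factor (F : V -> V -> Prop) (d : V -> nat) : Prop := {
  factor_sub : forall u v, F u v -> E u v;
  factor_sym : forall u v, F u v -> F v u;
  factor_finite : finite_edges F;
  factor_degree : forall x, degree_is F x (d x);
  factor_le : forall x, nat_le_card (d x) (f x);
  factor_holds : holdsP P V (remove_edges E F) (fun x => csub (f x) (d x))
}.

Lemma good_factor_empty : holdsP P V E f -> good_factor (fun _ _ => False) (fun _ => 0).
Proof.
  intros HP; split; try tauto.
  - exists []; tauto.
  - intro x; exists []; simpl; repeat split; [constructor | tauto | tauto].
  - intro x; destruct (f x); simpl; auto; lia.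
  - replace (remove_edges E (fun _ _ => False)) with E.
    + replace (fun x => csub (f x) 0) with f; [exact HP |].
      apply functional_extensionality; intro v; destruct (f v); simpl; auto; f_equal; lia.
    + do 2 (apply functional_extensionality; intros).
      apply propositional_extensionality; unfold remove_edges; tauto.
Qed.

Lemma good_factor_extend F d x :
  good_factor F d -> cpos (csub (f x) (d x)) ->
  exists F' d', good_factor F' d' /\ (forall v, d v <= d' v) /\ d' x = S (d x).
Proof.
  intros [Fsub Fsym [s Hs] Hdeg Hle HP] Hpos.
  destruct (P_hereditary _ _ _ HP x Hpos) as [y [Hposy [[Exy nFxy] HP']]].
  destruct HP as [[[_ [Gsym Girr]] _] _].
  assert (xy : x <> y) by (intros <-; exact (Girr x (conj Exy nFxy))).
  exists (add_edge F x y), (bump d x y); split; [split | split].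
  - intros u v [H | [[-> ->] | [-> ->]]]; auto.
    exact (proj1 (Gsym x y (conj Exy nFxy))).
  - intros u v [H | [[-> ->] | [-> ->]]]; unfold add_edge; auto.
  - exists ((x, y) :: (y, x) :: s); intros u v [H | [[-> ->] | [-> ->]]]; simpl; auto.
  - exact (degree_is_add_edge F d x y Fsym xy nFxy Hdeg).
  - intro v; unfold bump.
    destruct (excluded_middle_informative _) as [[-> | ->] |]; auto using nat_le_card_S.
  - rewrite <- remove_edge_remove_edges, <- fdec_csub; exact HP'.
  - intro v; unfold bump; destruct (excluded_middle_informative _); lia.
  - unfold bump; destruct (excluded_middle_informative _); tauto.
Qed.

Definition saturated (d : V -> nat) (x : V) : Prop :=
  (forall n, f x = cfin n -> d x = n) /\ (forall T, f x = cinf T -> 0 < d x).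

Lemma saturated_mono (d d' : V -> nat) (x : V) :
  (forall v, d v <= d' v) -> nat_le_card (d' x) (f x) -> saturated d x -> saturated d' x.
Proof.
  intros Hdd' Hle [Hfin Hinf]; specialize (Hdd' x); split.
  - intros n Hn; rewrite Hn in Hle; simpl in Hle; specialize (Hfin n Hn); lia.
  - intros T HT; specialize (Hinf T HT); lia.
Qed.

Lemma good_factor_saturate F d x :
  good_factor F d ->
  exists F' d', good_factor F' d' /\ (forall v, d v <= d' v) /\ saturated d' x.
Proof.
  intros HF; destruct (f x) as [n | T] eqn:Hfx.
  - remember (n - d x) as k eqn:Hk; revert F d HF Hk.
    induction k as [| k IH]; intros F d HF Hk.
    + exists F, d; split; [| split]; auto; split; [| congruence].
      intros m Hm; rewrite Hfx in Hm; injection Hm as <-; pose proof (factor_le F d HF x) as Hle.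
      rewrite Hfx in Hle; simpl in Hle; lia.
    + destruct (good_factor_extend F d x HF) as [F1 [d1 [HF1 [Hd1 Hx1]]]];
        [rewrite Hfx; simpl; lia |].
      destruct (IH F1 d1 HF1) as [F2 [d2 [HF2 [Hd2 Hsat]]]]; [lia |].
      exists F2, d2; split; [| split]; auto.
      intro v; specialize (Hd1 v); specialize (Hd2 v); lia.
  - destruct (good_factor_extend F d x HF) as [F1 [d1 [HF1 [Hd1 Hx1]]]];
      [rewrite Hfx; exact I |].
    exists F1, d1; split; [| split]; auto; split; [congruence | intros; lia].
Qed.

Lemma good_factor_saturate_list F d (W : list V) :
  good_factor F d -> exists F' d', good_factor F' d' /\ forall x, In x W -> saturated d' x.
Proof.
  intros HF; induction W as [| x W [F1 [d1 [HF1 HW]]]].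
  - exists F, d; split; [exact HF | intros _ []].
  - destruct (good_factor_saturate F1 d1 x HF1) as [F2 [d2 [HF2 [Hd Hx]]]].
    exists F2, d2; split; [exact HF2 |].
    intros z [<- | Hz]; [exact Hx |].
    exact (saturated_mono d1 d2 z Hd (factor_le F2 d2 HF2 z) (HW z Hz)).
Qed.

End Saturation.

Theorem mainTheorem1 :
  forall (P : property), rep_invariant P -> hereditary P ->
  forall (V : Type) (E : V -> V -> Prop) (f : V -> card),
  holdsP P V E f ->
  forall W : list V,
  exists (F : V -> V -> Prop) (d : V -> nat),
    (* F is a finite set of edges of G *)
    (forall u v, F u v -> E u v) /\ (forall u v, F u v -> F v u) /\
    finite_edges F /\
    (* d = d_F *)
    (forall x, degree_is F x (d x)) /\
    (* F is an f-factor *)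
    (forall x, nat_le_card (d x) (f x)) /\
    holdsP P V (remove_edges E F) (fun x => csub (f x) (d x)) /\
    (forall x, In x W -> forall n, f x = cfin n -> d x = n) /\
    (forall x, In x W -> forall T, f x = cinf T -> 0 < d x).
Proof.
  intros P _ Hher V E f HP W.
  destruct (good_factor_saturate_list P Hher V E f _ _ W (good_factor_empty P V E f HP))
    as [F [d [[Fsub Fsym Ffin Fdeg Fle FP] Hsat]]].
  exists F, d; do 6 (split; [assumption |]).
  split; intros x Hx; apply (Hsat x Hx).
Qed.
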